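(* Let $\|\cdot\|$ be a norm on $\mathbb{B}(\mathcal{H})$ which is an $L$-norm or an $M$-norm. Then $\|EAE\|\le\|A\|$ for every (orthogonal) projection $E\in\mathbb{B}(\mathcal{H})$ and every $A\in\mathbb{B}(\mathcal{H})$.
   Context: $\mathbb{B}(\mathcal{H})$ is the algebra of bounded operators on a Hilbert space $\mathcal{H}$ with identity $I$. A norm $\|\cdot\|$ on $\mathbb{B}(\mathcal{H})$ is an $M$-norm if $\left\|\sum_{i=1}^k C_i^*X_iC_i\right\|\le \max_{1\le i\le k}\|X_i\|$ for all $k$, all $X_i\in\mathbb{B}(\mathcal{H})$ and all $C_i\in\mathbb{B}(\mathcal{H})$ with $\sum_{i=1}^k C_i^*C_i=I$. It is an $L$-norm if $\sum_{i=1}^k\|C_iXC_i^*\|\le\|X\|$ for all $k$, all $X\in\mathbb{B}(\mathcal{H})$ and all $C_i$ with $\sum_{i=1}^k C_i^*C_i=I$. *)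

From HB Require Import structures.
From mathcomp Require Import all_boot all_order all_algebra.
From mathcomp Require Import complex.
From mathcomp Require Import reals.
Set Implicit Arguments. Unset Strict Implicit. Unset Printing Implicit Defensive.
Import Order.TTheory GRing.Theory Num.Theory.
Local Open Scope ring_scope.
Local Open Scope complex_scope.

Section Hilbert.
Variable R : realType.
Variable V : lmodType R[i].
Variable ip : V -> V -> R[i].

Definition is_inner_product : Prop :=
  [/\ (forall (a : R[i]) (x y z : V), ip (a *: x + y) z = a * ip x z + ip y z),
      (forall x y : V, ip x y = (ip y x)^*),
      (forall x : V, 0 <= ip x x) &
      (forall x : V, ip x x = 0 -> x = 0)].

Definition hnorm (x : V) : R := Num.sqrt (complex.Re (ip x x)).

Definition hcomplete : Prop :=
  forall u : nat -> V,
    (forall e : R, 0 < e -> exists N : nat, forall m n : nat,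
        (N <= m)%N -> (N <= n)%N -> hnorm (u m - u n) < e) ->
    exists l : V, forall e : R, 0 < e -> exists N : nat, forall n : nat,
        (N <= n)%N -> hnorm (u n - l) < e.

Definition is_hilbert : Prop := is_inner_product /\ hcomplete.

Definition bounded_op (T : V -> V) : Prop :=
  (forall (a : R[i]) (x y : V), T (a *: x + y) = a *: T x + T y) /\
  exists M : R, forall x : V, hnorm (T x) <= M * hnorm x.

Definition is_adjoint (T S : V -> V) : Prop :=
  forall x y : V, ip (T x) y = ip x (S y).

Definition is_projection (E : V -> V) : Prop :=
  [/\ bounded_op E, is_adjoint E E & forall x, E (E x) = E x].

Definition is_op_norm (nrm : (V -> V) -> R) : Prop :=
  [/\ (forall T, bounded_op T -> nrm T = 0 -> forall x, T x = 0),
      (forall (a : R[i]) T, bounded_op T ->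
          nrm (fun x => a *: T x) = Normc.normc a * nrm T) &
      (forall T S, bounded_op T -> bounded_op S ->
          nrm (fun x => T x + S x) <= nrm T + nrm S)].

Definition is_M_norm (nrm : (V -> V) -> R) : Prop :=
  forall (k : nat) (X C Cs : 'I_k -> V -> V),
    (forall i, bounded_op (X i)) -> (forall i, bounded_op (C i)) ->
    (forall i, bounded_op (Cs i)) -> (forall i, is_adjoint (C i) (Cs i)) ->
    (forall x, \sum_(i < k) Cs i (C i x) = x) ->
    nrm (fun x => \sum_(i < k) Cs i (X i (C i x)))
      <= \big[Num.max/0]_(i < k) nrm (X i).

Definition is_L_norm (nrm : (V -> V) -> R) : Prop :=
  forall (k : nat) (X : V -> V) (C Cs : 'I_k -> V -> V),
    bounded_op X -> (forall i, bounded_op (C i)) ->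
    (forall i, bounded_op (Cs i)) -> (forall i, is_adjoint (C i) (Cs i)) ->
    (forall x, \sum_(i < k) Cs i (C i x) = x) ->
    \sum_(i < k) nrm (fun x => C i (X (Cs i x))) <= nrm X.

End Hilbert.

From HB Require Import structures.
From mathcomp Require Import all_boot all_order all_algebra.
From mathcomp Require Import complex.
From mathcomp Require Import reals.
From Stdlib Require Import FunctionalExtensionality.
Set Implicit Arguments. Unset Strict Implicit.
Import Order.TTheory GRing.Theory Num.Theory.
Local Open Scope ring_scope.
Local Open Scope complex_scope.

(* Write F := I - E.  Then E and F are self-adjoint with E^* E + F^* F = I,
   so (E, F) is an admissible family in both definitions.  For an L-norm this
   gives ||EAE|| + ||FAF|| <= ||A||; for an M-norm, with X_1 = A and X_2 = 0,
   it gives ||EAE|| <= max(||A||, ||0||) = ||A||. *)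

Section InnerProduct.
Variables (R : realType) (V : lmodType R[i]) (ip : V -> V -> R[i]).
Hypothesis hip : is_inner_product ip.

Lemma ipDl x y z : ip (x + y) z = ip x z + ip y z.
Proof. by case: hip => lin _ _ _; have := lin 1 x y z; rewrite scale1r mul1r. Qed.

Lemma ip0l z : ip 0 z = 0.
Proof. by apply: (addrI (ip 0 z)); rewrite -ipDl !addr0. Qed.

Lemma ipNl x z : ip (- x) z = - ip x z.
Proof.
case: hip => lin _ _ _.
by have := lin (-1) x 0 z; rewrite addr0 scaleN1r ip0l addr0 mulN1r.
Qed.

Lemma ipBl x y z : ip (x - y) z = ip x z - ip y z.
Proof. by rewrite ipDl ipNl. Qed.

Lemma ipDr x y z : ip x (y + z) = ip x y + ip x z.
Proof. by case: hip => _ sym _ _; rewrite sym ipDl rmorphD /= -!sym. Qed.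

Lemma ipNr x z : ip x (- z) = - ip x z.
Proof. by case: hip => _ sym _ _; rewrite sym ipNl rmorphN /= -sym. Qed.

Lemma ipBr x y z : ip x (y - z) = ip x y - ip x z.
Proof. by rewrite ipDr ipNr. Qed.

Lemma ip0r x : ip x 0 = 0.
Proof. by case: hip => _ sym _ _; rewrite sym ip0l conjc0. Qed.

Lemma Re_ip_ge0 x : 0 <= complex.Re (ip x x).
Proof. by case: hip => _ _ pos _; have := pos x; rewrite lecE => /andP[]. Qed.

Lemma ip_pythagoras x y : ip x y = 0 ->
  complex.Re (ip (x + y) (x + y)) = complex.Re (ip x x) + complex.Re (ip y y).
Proof.
case: hip => _ sym _ _ xy0.
have yx0 : ip y x = 0 by rewrite sym xy0 conjc0.
rewrite ipDl !ipDr xy0 yx0 addr0 add0r.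
by case: (ip x x) => ? ?; case: (ip y y).
Qed.

Lemma hnorm0 : hnorm ip 0 = 0.
Proof. by rewrite /hnorm ip0l sqrtr0. Qed.

Lemma hnormN x : hnorm ip (- x) = hnorm ip x.
Proof. by rewrite /hnorm ipNl ipNr opprK. Qed.

End InnerProduct.

Section BoundedOperators.
Variables (R : realType) (V : lmodType R[i]) (ip : V -> V -> R[i]).
Hypothesis hip : is_inner_product ip.

Lemma bounded_op0 T : bounded_op ip T -> T 0 = 0.
Proof.
case=> lin _; have := lin 1 0 0; rewrite scaler0 addr0 scale1r => T0.
by apply: (addrI (T 0)); rewrite addr0 -T0.
Qed.

Lemma bounded_opB T x y : bounded_op ip T -> T (x - y) = T x - T y.
Proof.
case=> lin _.
by have := lin (-1) y x; rewrite !scaleN1r addrC => ->; rewrite addrC.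
Qed.

Lemma bounded_op_ge0 T : bounded_op ip T ->
  exists2 M, 0 <= M & forall x, hnorm ip (T x) <= M * hnorm ip x.
Proof.
case=> _ [M hM]; exists (Num.max M 0) => [|x]; first by rewrite le_max lexx orbT.
apply: le_trans (hM x) _; apply: ler_wpM2r; first exact: sqrtr_ge0.
by rewrite le_max lexx.
Qed.

Lemma bounded_op_comp T S : bounded_op ip T -> bounded_op ip S ->
  bounded_op ip (fun x => T (S x)).
Proof.
move=> hT hS; split=> [a x y|].
  by have [linT _] := hT; have [linS _] := hS; rewrite linS linT.
have [M1 M1_ge0 hM1] := bounded_op_ge0 hT; have [M2 _ hM2] := bounded_op_ge0 hS.
exists (M1 * M2) => x; apply: le_trans (hM1 _) _; rewrite -mulrA.
exact: ler_wpM2l.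
Qed.

Lemma bounded_op_zero : bounded_op ip (fun _ => 0).
Proof.
split=> [a x y|]; first by rewrite scaler0 addr0.
by exists 0 => x; rewrite hnorm0 // mul0r.
Qed.

Lemma bounded_op_scaleN1 T : bounded_op ip T ->
  bounded_op ip (fun x => (-1) *: T x).
Proof.
case=> lin [M hM]; split=> [a x y|].
  by rewrite lin scalerDr !scalerA mulrC.
by exists M => x; rewrite scaleN1r hnormN.
Qed.

End BoundedOperators.

Section Projections.
Variables (R : realType) (V : lmodType R[i]) (ip : V -> V -> R[i]).
Hypothesis hip : is_inner_product ip.
Variable E : V -> V.
Hypothesis hE : is_projection ip E.

Definition compl (x : V) : V := x - E x.

Lemma projection_compl : is_projection ip compl.
Proof.
have [hEb adj idem] := hE; have [lin _] := hEb.
have E_compl x : E (compl x) = 0.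
  by rewrite /compl (bounded_opB (ip:=ip)) // idem subrr.
split=> [|x y|x]; last by rewrite {1}/compl E_compl subr0.
- split=> [a x y|]; first by rewrite /compl lin scalerBr opprD addrACA.
  exists 1 => x; rewrite mul1r /hnorm ler_sqrt; last exact: Re_ip_ge0.
  have ort : ip (E x) (compl x) = 0 by rewrite adj E_compl ip0r.
  have -> : ip x x = ip (E x + compl x) (E x + compl x).
    by rewrite /compl addrC subrK.
  by rewrite ip_pythagoras // lerDr Re_ip_ge0.
- by rewrite /compl (ipBl hip) (ipBr hip) adj.
Qed.

Lemma projection_resolution x : E (E x) + compl (compl x) = x.
Proof.
have [_ _ idem] := hE; have [_ _ idem'] := projection_compl.
by rewrite idem' idem /compl addrC subrK.
Qed.

Definition pinching (i : 'I_2) : V -> V := if val i == 0%N then E else compl.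

Lemma pinching_bounded i : bounded_op ip (pinching i).
Proof.
have [hEb _ _] := hE; have [hFb _ _] := projection_compl.
by rewrite /pinching; case: ifP.
Qed.

Lemma pinching_adjoint i : is_adjoint ip (pinching i) (pinching i).
Proof.
have [_ adjE _] := hE; have [_ adjF _] := projection_compl.
by rewrite /pinching; case: ifP.
Qed.

Lemma pinching_resolution x : \sum_(i < 2) pinching i (pinching i x) = x.
Proof.
by rewrite !big_ord_recl big_ord0 addr0 /pinching /= projection_resolution.
Qed.

End Projections.

Section OperatorNorms.
Variables (R : realType) (V : lmodType R[i]) (ip : V -> V -> R[i]).
Hypothesis hip : is_inner_product ip.
Variable nrm : (V -> V) -> R.
Hypothesis hn : is_op_norm ip nrm.

Lemma op_norm_zero : nrm (fun _ => 0) = 0.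
Proof.
have [_ hom _] := hn.
have -> : (fun _ : V => (0 : V)) = (fun _ => 0 *: (0 : V)).
  by apply: functional_extensionality => x; rewrite scale0r.
by rewrite hom ?Normc.normc0 ?mul0r //; apply: bounded_op_zero.
Qed.

Lemma op_norm_ge0 T : bounded_op ip T -> 0 <= nrm T.
Proof.
have [_ hom tri] := hn => hT.
have := tri _ _ hT (bounded_op_scaleN1 hip hT).
have -> : (fun x => T x + (-1) *: T x) = (fun _ => 0).
  by apply: functional_extensionality => x; rewrite scaleN1r subrr.
rewrite op_norm_zero hom // normcN Normc.normc1 mul1r -mulr2n.
by rewrite pmulrn_lge0.
Qed.

Variables (E A : V -> V).
Hypotheses (hE : is_projection ip E) (hA : bounded_op ip A).

Lemma L_norm_compression : is_L_norm ip nrm ->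
  nrm (fun x => E (A (E x))) <= nrm A.
Proof.
move=> hL.
have := hL 2 A _ _ hA (pinching_bounded hip hE) (pinching_bounded hip hE)
  (pinching_adjoint hip hE) (pinching_resolution hip hE).
rewrite !big_ord_recl big_ord0 addr0 /pinching /=; apply: le_trans.
have [hFb _ _] := projection_compl hip hE.
by rewrite lerDl op_norm_ge0 //; do 2 apply: bounded_op_comp => //.
Qed.

Lemma M_norm_compression : is_M_norm ip nrm ->
  nrm (fun x => E (A (E x))) <= nrm A.
Proof.
move=> hM; pose X (i : 'I_2) := if val i == 0%N then A else (fun _ : V => 0).
have hX i : bounded_op ip (X i).
  by rewrite /X; case: ifP => _ //; apply: bounded_op_zero.
have := hM 2 X _ _ hX (pinching_bounded hip hE) (pinching_bounded hip hE)
  (pinching_adjoint hip hE) (pinching_resolution hip hE).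
have [hEb _ _] := hE; have [hFb _ _] := projection_compl hip hE.
have -> : (fun x => \sum_(i < 2) pinching E i (X i (pinching E i x)))
          = (fun x => E (A (E x))).
  apply: functional_extensionality => x.
  by rewrite !big_ord_recl big_ord0 /pinching /X /= (bounded_op0 hFb) !addr0.
rewrite !big_ord_recl big_ord0 /X /= op_norm_zero => /le_trans; apply.
by rewrite !ge_max lexx (op_norm_ge0 hA).
Qed.

End OperatorNorms.

Theorem lemma2p8 (R : realType) (V : lmodType R[i]) (ip : V -> V -> R[i])
  (hH : is_hilbert ip) (nrm : (V -> V) -> R) (hn : is_op_norm ip nrm)
  (hLM : is_L_norm ip nrm \/ is_M_norm ip nrm)
  (E A : V -> V) (hE : is_projection ip E) (hA : bounded_op ip A) :
  nrm (fun x => E (A (E x))) <= nrm A.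
Proof.
have [hip _] := hH.
case: hLM => [hL | hM].
- exact: (L_norm_compression hip hn hE hA hL).
- exact: (M_norm_compression hip hn hE hA hM).
Qed.
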